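(* Let $q=2^m$ with $m$ a positive integer, let $b\in\mathbb{F}_q^*$ and $\delta\in\mathbb{F}_{q^2}\setminus\mathbb{F}_q$. Put $$A=b\,\mathrm{Tr}_{q^2/q}(\delta),\quad B=b\,\delta^{2q+2}\mathrm{Tr}_{q^2/q}(\delta),\quad C=\mathrm{Tr}_{q^2/q}(\delta)^2,\quad D=1/A,$$ and define $S_{-1}=0$, $S_0=1$, $S_i=C^{2^{i-1}}S_{i-1}+D^{2^{i-1}}S_{i-2}$ for $i\geq1$. If the polynomial $$P(x)=b(x^q+x+\delta)^{2q+3}+x$$ permutes $\mathbb{F}_{q^2}$, then its compositional inverse over $\mathbb{F}_{q^2}$ is $$P^{-1}(x)=x+b\left(\delta+\sum_{i=0}^{m-1}\left(D^{2^i}S_{m-2-i}^{2^{i+1}}+D^{1-2^{i}}S_i\right)\left(x^q+x+B\right)^{2^i}\right)^{2q+3}.$$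
   Context: $\mathrm{Tr}_{q^2/q}(y)=y+y^q$. The compositional inverse of a permutation polynomial $f$ of $\mathbb{F}_{Q}$ is the unique polynomial $f^{-1}$ (modulo $x^Q-x$) with $f(f^{-1}(c))=f^{-1}(f(c))=c$ for all $c\in\mathbb{F}_Q$. *)

From mathcomp Require Import all_boot all_algebra all_field.
Set Implicit Arguments. Unset Strict Implicit. Unset Printing Implicit Defensive.
Import GRing.Theory.
Local Open Scope ring_scope.

Definition Tr (F : fieldType) (q : nat) (y : F) : F := y + y ^+ q.

(* Shifted sequence: Sh n = S_{n-1}, i.e. Sh 0 = S_{-1} = 0, Sh 1 = S_0 = 1,
   Sh (n+2) = S_{n+1} = C^{2^n} S_n + D^{2^n} S_{n-1}. *)
Fixpoint Sh (F : fieldType) (C D : F) (n : nat) : F :=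
  match n with
  | 0 => 0
  | S 0 => 1
  | S ((S n'') as n') => C ^+ (2 ^ n'') * Sh C D n' + D ^+ (2 ^ n'') * Sh C D n''
  end.

From mathcomp Require Import all_boot all_algebra all_field.
From mathcomp Require Import ring zify.
Set Implicit Arguments. Unset Strict Implicit. Unset Printing Implicit Defensive.
Import GRing.Theory.
Local Open Scope ring_scope.

(* Write q = 2^m and L t = t^4 + C t^2 + D t.  For x in F_(q^2) the element
   t = x^q + x lies in F_q and P(x)^q + P(x) + B = A L(t), so inverting P comes
   down to recovering t from L(t).  Reducing modulo L gives
   t^(2^k) = Q_k(L t) + Sh_k t^2 + Sl_k t for an explicit 2-polynomial Q_k.
   As C and D lie in F_q, tau = Sh_(m+1) + Sl_m is idempotent, so tau is 0 or 1.
   Bijectivity of P makes L injective on F_q, hence on F_(q^2); if tau were 0,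
   the nonzero 2-polynomial Q_(2m), of degree 2^(2m-2), would vanish on the
   whole image of L.  With tau = 1, comparing the reductions for k = m and
   k = 2m on F_q writes t as a 2-polynomial in L(t), whose coefficients are
   those of P^-1. *)

Section Char2.
Variable F : fieldType.
Hypothesis F2 : 2%N \in [pchar F].

(* [ring] ignores the characteristic, so identities of characteristic 2
   are proved in the form [x = y + 2 * e]. *)
Lemma eq_char2 (x y e : F) : x = y + 2%:R * e -> x = y.
Proof. by rewrite (pcharf0 F2) mul0r addr0. Qed.

Lemma exprD_pow2 k (x y : F) : (x + y) ^+ (2 ^ k) = x ^+ (2 ^ k) + y ^+ (2 ^ k).
Proof. by apply: exprDn_pchar; rewrite pnatX (pnatE _ (pcharf_prime F2)) F2. Qed.

Lemma sqrrD_char2 (x y : F) : (x + y) ^+ 2 = x ^+ 2 + y ^+ 2.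
Proof. exact: (exprD_pow2 1). Qed.

Lemma exprD4_char2 (x y : F) : (x + y) ^+ 4 = x ^+ 4 + y ^+ 4.
Proof. exact: (exprD_pow2 2). Qed.

Lemma sumr_exp_pow2 k (I : Type) (r : seq I) (P : pred I) (f : I -> F) :
  (\sum_(i <- r | P i) f i) ^+ (2 ^ k) = \sum_(i <- r | P i) f i ^+ (2 ^ k).
Proof.
apply: (big_morph (fun x => x ^+ (2 ^ k))) => [x y|]; first exact: exprD_pow2.
by rewrite expr0n expn_eq0.
Qed.

Lemma fixed_pow2D m (x y : F) :
  x ^+ (2 ^ m) = x -> y ^+ (2 ^ m) = y -> (x + y) ^+ (2 ^ m) = x + y.
Proof. by move=> hx hy; rewrite exprD_pow2 hx hy. Qed.

Lemma fixed_pow2M m (x y : F) :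
  x ^+ (2 ^ m) = x -> y ^+ (2 ^ m) = y -> (x * y) ^+ (2 ^ m) = x * y.
Proof. by move=> hx hy; rewrite exprMn hx hy. Qed.

Lemma fixed_pow2X m n (x : F) : x ^+ (2 ^ m) = x -> (x ^+ n) ^+ (2 ^ m) = x ^+ n.
Proof. by move=> hx; rewrite exprAC hx. Qed.

Fixpoint frob_comb (g : nat -> F) k (y : F) : F :=
  if k is k'.+1 then frob_comb g k' y ^+ 2 + g k' ^+ 2 * y else 0.

Lemma frob_combD g n k y :
  frob_comb g (n + k) y = frob_comb g n y ^+ (2 ^ k) + frob_comb (fun j => g (n + j)%N) k y.
Proof.
elim: k => [|k IH]; first by rewrite addn0 expr1 addr0.
by rewrite addnS /= IH sqrrD_char2 expnSr exprM addrA.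
Qed.

Lemma frob_combE g k y :
  frob_comb g k y = \sum_(i < k) g (k - i.+1)%N ^+ (2 ^ i.+1) * y ^+ (2 ^ i).
Proof.
elim: k => [|k IH]; first by rewrite big_ord0.
rewrite /= IH big_ord_recl subn1 expn0 expr1 addrC (sumr_exp_pow2 1).
congr (_ + _); apply: eq_bigr => i _.
by rewrite subSS exprMn -!exprM -!expnSr.
Qed.

Lemma frob_comb_fixed m g k y :
  (forall j, g j ^+ (2 ^ m) = g j) -> y ^+ (2 ^ m) = y ->
  frob_comb g k y ^+ (2 ^ m) = frob_comb g k y.
Proof.
move=> hg hy; elim: k => [|k IH] /=; first by rewrite expr0n expn_eq0.
by rewrite fixed_pow2D ?fixed_pow2M ?fixed_pow2X.
Qed.

End Char2.

Section FrobCombPoly.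
Variable F : fieldType.

Fixpoint frob_combp (g : nat -> F) k : {poly F} :=
  if k is k'.+1 then frob_combp g k' ^+ 2 + (g k' ^+ 2) *: 'X else 0.

Lemma horner_frob_combp g k y : (frob_combp g k).[y] = frob_comb g k y.
Proof.
elim: k => [|k IH] /=; first by rewrite horner0.
by rewrite hornerD hornerZ hornerX -IH !expr2 hornerM.
Qed.

Lemma size_frob_combp g k :
  g 0%N = 0 -> g 1%N = 1 -> size (frob_combp g k.+2) = (2 ^ k).+1.
Proof.
move=> g0 g1; elim: k => [|k IH].
  by rewrite /= g0 g1 expr0n scale0r !(expr0n, addr0) expr1n scale1r add0r size_polyX.
have p_neq0 : frob_combp g k.+2 != 0 by rewrite -size_poly_gt0 IH.
have size_sq : size (frob_combp g k.+2 ^+ 2) = (2 ^ k.+1).+1.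
  by rewrite expr2 size_mul // IH addSn addnS /= addnn -mul2n -expnS.
rewrite /= size_polyDl size_sq //.
apply: leq_ltn_trans (size_scale_leq _ _) _.
by rewrite size_polyX ltnS expnS leq_pmulr ?expn_gt0.
Qed.

End FrobCombPoly.

Lemma frob_comb_neq0 (F : finFieldType) (g : nat -> F) k :
  g 0%N = 0 -> g 1%N = 1 -> (2 ^ k < #|F|)%N -> exists y, frob_comb g k.+2 y != 0.
Proof.
move=> g0 g1 card_gt; apply/existsP; apply: contraLR card_gt; rewrite negb_exists -leqNgt.
move=> /forallP /= all0; rewrite -ltnS -(size_frob_combp k g0 g1) cardE.
apply: max_poly_roots (enum_uniq F); first by rewrite -size_poly_gt0 size_frob_combp.
by apply/allP => y _; rewrite /root horner_frob_combp; apply/negPn; apply: all0.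
Qed.

Section LinearizedQuartic.
Variables (F : fieldType) (C D : F).
Hypothesis F2 : 2%N \in [pchar F].
Local Notation S := (Sh C D).

Definition lin_quartic (x : F) : F := x ^+ 4 + C * x ^+ 2 + D * x.

(* Together with [Sh], the coefficients of the remainder
   [x ^+ (2 ^ k) = S k * x ^+ 2 + Sl k * x] modulo [lin_quartic]. *)
Definition Sl k : F := if k is k'.+1 then D * S k' ^+ 2 else 1.

Lemma ShSS k : S k.+2 = C ^+ (2 ^ k) * S k.+1 + D ^+ (2 ^ k) * S k.
Proof. by []. Qed.

Lemma SlS k : Sl k.+1 = D * S k ^+ 2.
Proof. by []. Qed.

Lemma ShSS_sqr k : S k.+2 = C * S k.+1 ^+ 2 + D ^+ 2 * S k ^+ 4.
Proof.
suff /(_ k)[] : forall n, S n.+2 = C * S n.+1 ^+ 2 + D ^+ 2 * S n ^+ 4 /\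
                        S n.+3 = C * S n.+2 ^+ 2 + D ^+ 2 * S n.+1 ^+ 4 by [].
clear k.
elim=> [|k [IH2 IH3]]; first by split; rewrite /= ?expr1n; ring.
split=> //.
have sq4 (c d u v w : F) :
    c ^+ 4 * (C * u ^+ 2 + D ^+ 2 * v ^+ 4) + d ^+ 4 * (C * v ^+ 2 + D ^+ 2 * w ^+ 4)
    = C * (c ^+ 2 * u + d ^+ 2 * v) ^+ 2 + D ^+ 2 * (c * v + d * w) ^+ 4.
  by rewrite (sqrrD_char2 F2) (exprD4_char2 F2); ring.
have pow4 (x : F) : x ^+ (2 ^ k.+2) = (x ^+ (2 ^ k)) ^+ 4.
  by rewrite -exprM !expnSr -mulnA.
have pow2 (x : F) : x ^+ (2 ^ k.+1) = (x ^+ (2 ^ k)) ^+ 2 by rewrite -exprM expnSr.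
have -> : S k.+4 = C * (C ^+ (2 ^ k.+1) * S k.+2 + D ^+ (2 ^ k.+1) * S k.+1) ^+ 2
                   + D ^+ 2 * (C ^+ (2 ^ k) * S k.+1 + D ^+ (2 ^ k) * S k) ^+ 4.
  by rewrite !pow2 -sq4 -IH2 -IH3 -!pow4.
by rewrite -!ShSS.
Qed.

Lemma ShS_Sl k : S k.+1 = C * S k ^+ 2 + Sl k ^+ 2.
Proof.
case: k => [|k]; first by rewrite /= expr0n mulr0 add0r expr1n.
by rewrite ShSS_sqr SlS exprMn -exprM.
Qed.

Lemma SlSS k : Sl k.+2 = C ^+ (2 ^ k) * Sl k.+1 + D ^+ (2 ^ k) * Sl k.
Proof.
case: k => [|k]; first by rewrite /= !expr1 expr1n expr0n /=; ring.
by rewrite !SlS ShSS (sqrrD_char2 F2) !exprMn !expnSr !exprM; ring.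
Qed.

Lemma Sh_Sl_det k : (S k.+1 * Sl k + Sl k.+1 * S k) * D = D ^+ (2 ^ k).
Proof.
elim: k => [|k IH]; first by rewrite /= expr0n expr1 /=; ring.
have Sl_sq : Sl k ^+ 2 = S k.+1 + C * S k ^+ 2.
  by rewrite ShS_Sl; apply: (eq_char2 F2 (e := - (C * S k ^+ 2))); ring.
rewrite expnSr exprM -IH (ShS_Sl k.+1) !SlS !exprMn (sqrrD_char2 F2) !exprMn Sl_sq.
ring.
Qed.

Lemma Sh_Sl_addn n k :
  S (n + k) = S n ^+ (2 ^ k) * S k.+1 + Sl n ^+ (2 ^ k) * S k /\
  Sl (n + k) = S n ^+ (2 ^ k) * Sl k.+1 + Sl n ^+ (2 ^ k) * Sl k.
Proof.
elim: k => [|k [IHS IHSl]]; first by rewrite addn0 /= !expr1 expr0n /=; split; ring.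
rewrite addnS ShS_Sl SlS IHS IHSl !expnSr !exprM.
set u := S n ^+ (2 ^ k); set v := Sl n ^+ (2 ^ k).
split.
  transitivity (u ^+ 2 * (C * S k.+1 ^+ 2 + Sl k.+1 ^+ 2) + v ^+ 2 * (C * S k ^+ 2 + Sl k ^+ 2)).
    by rewrite !(sqrrD_char2 F2) !exprMn; ring.
  by rewrite -!ShS_Sl.
transitivity (u ^+ 2 * (D * S k.+1 ^+ 2) + v ^+ 2 * (D * S k ^+ 2)).
  by rewrite !(sqrrD_char2 F2) !exprMn; ring.
by rewrite -!SlS.
Qed.

Lemma lin_quarticD x y : lin_quartic (x + y) = lin_quartic x + lin_quartic y.
Proof.
by rewrite /lin_quartic (exprD4_char2 F2) (sqrrD_char2 F2); ring.
Qed.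

Lemma expr_pow2_quartic k x :
  x ^+ (2 ^ k) = frob_comb S k (lin_quartic x) + S k * x ^+ 2 + Sl k * x.
Proof.
elim: k => [|k IH]; first by rewrite /= expr1; ring.
rewrite expnSr exprM IH ShS_Sl /= /lin_quartic !(sqrrD_char2 F2) !exprMn.
set s := S k; set t := Sl k; set Q := frob_comb S k _.
by apply: (eq_char2 F2 (e := - (s ^+ 2 * C * x ^+ 2 + s ^+ 2 * D * x))); ring.
Qed.

Section FrobeniusFixed.
Variable m : nat.
Hypotheses (C_fixed : C ^+ (2 ^ m) = C) (D_fixed : D ^+ (2 ^ m) = D).

Lemma Sh_fixed j : S j ^+ (2 ^ m) = S j.
Proof.
suff /(_ j)[] : forall n, S n ^+ (2 ^ m) = S n /\ S n.+1 ^+ (2 ^ m) = S n.+1 by [].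
elim=> [|n [IHn IHSn]]; first by rewrite /= expr0n expn_eq0 expr1n.
by split=> //; rewrite ShSS (fixed_pow2D F2) ?fixed_pow2M ?fixed_pow2X.
Qed.

Lemma Sl_fixed j : Sl j ^+ (2 ^ m) = Sl j.
Proof. by case: j => [|j]; rewrite /= ?expr1n // fixed_pow2M ?fixed_pow2X ?Sh_fixed. Qed.

Lemma lin_quartic_frob x : lin_quartic (x ^+ (2 ^ m)) = lin_quartic x ^+ (2 ^ m).
Proof.
rewrite /lin_quartic !(exprD_pow2 F2) [(C * _) ^+ _]exprMn [(D * _) ^+ _]exprMn.
by rewrite C_fixed D_fixed ![_ ^+ (2 ^ m) ^+ _]exprAC.
Qed.

Hypothesis D_neq0 : D != 0.

Lemma Sh_Sl_detm : S m.+1 * Sl m + Sl m.+1 * S m = 1.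
Proof. by apply: (mulIf D_neq0); rewrite Sh_Sl_det D_fixed mul1r. Qed.

Lemma Sh_Sl_tau_idem : (S m.+1 + Sl m) ^+ 2 = S m.+1 + Sl m.
Proof.
have ShS_sq : S m.+1 ^+ 2 = C * S m ^+ 2 + Sl m.
  apply: (mulfI D_neq0); have := SlSS m.
  by rewrite C_fixed D_fixed !SlS => ->; ring.
by rewrite (sqrrD_char2 F2) ShS_sq [S m.+1]ShS_Sl; ring.
Qed.

Lemma Sh_Sl_double :
  S (m + m) = (S m.+1 + Sl m) * S m /\ Sl (m + m) = 1 + (S m.+1 + Sl m) * Sl m.
Proof.
have [-> ->] := Sh_Sl_addn m m; rewrite Sh_fixed Sl_fixed -Sh_Sl_detm.
by split; [ring | apply: (eq_char2 F2 (e := - (S m.+1 * Sl m))); ring].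
Qed.

End FrobeniusFixed.

End LinearizedQuartic.

Lemma card_pchar2 (F : finFieldType) m : #|F| = ((2 ^ m) ^ 2)%N -> 2%N \in [pchar F].
Proof. by move=> cardF; apply: (card_finPcharP (n := (m * 2)%N)); rewrite // cardF expnM. Qed.

Lemma expr_pow2_card (F : finFieldType) m :
  #|F| = ((2 ^ m) ^ 2)%N -> forall x : F, x ^+ (2 ^ m) ^+ (2 ^ m) = x.
Proof. by move=> cardF x; rewrite -exprM -{2}(expn1 (2 ^ m)) -expnS -cardF expf_card. Qed.

Section FiniteField.
Variables (F : finFieldType) (m : nat) (C D : F).
Hypotheses (m_gt0 : (0 < m)%N) (cardF : #|F| = ((2 ^ m) ^ 2)%N).
Hypotheses (C_fixed : C ^+ (2 ^ m) = C) (D_fixed : D ^+ (2 ^ m) = D) (D_neq0 : D != 0).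
Hypothesis L_fixed_eq0 : forall t, t ^+ (2 ^ m) = t -> lin_quartic C D t = 0 -> t = 0.
Local Notation S := (Sh C D).
Local Notation L := (lin_quartic C D).

Let F2 : 2%N \in [pchar F] := card_pchar2 cardF.

Lemma lin_quartic_inj : injective L.
Proof.
suff L_eq0 x : L x = 0 -> x = 0.
  move=> x y Lxy; apply/eqP; rewrite -subr_eq0 (oppr_pchar2 F2); apply/eqP/L_eq0.
  by rewrite lin_quarticD // Lxy addrr_pchar2.
move=> Lx0; have tr_fixed : (x + x ^+ (2 ^ m)) ^+ (2 ^ m) = x + x ^+ (2 ^ m).
  by rewrite exprD_pow2 // (expr_pow2_card cardF) addrC.
have := L_fixed_eq0 tr_fixed.
rewrite lin_quarticD // lin_quartic_frob // Lx0 expr0n expn_eq0 addr0 => /(_ erefl) tr0.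
have x_fixed : x ^+ (2 ^ m) = x by rewrite -[RHS]addr0 -tr0 addKr_pchar2.
exact: L_fixed_eq0 x_fixed Lx0.
Qed.

Lemma Sh_Sl_tau : S m.+1 + Sl C D m = 1.
Proof.
have tau_neq0 : S m.+1 + Sl C D m != 0.
  (* Otherwise x = x ^+ (q ^ 2) forces [frob_comb S (m + m)] to vanish on the
     image of [L], which is all of [F]. *)
  apply/eqP => tau0; have [S2m Sl2m] := Sh_Sl_double F2 C_fixed D_fixed D_neq0.
  rewrite tau0 mul0r in S2m; rewrite tau0 mul0r addr0 in Sl2m.
  have comb_L0 x : frob_comb S (m + m) (L x) = 0.
    have := expr_pow2_quartic C D F2 (m + m) x.
    by rewrite expnD exprM (expr_pow2_card cardF) S2m Sl2m mul0r addr0 mul1r -{1}[x]add0r => /addIr.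
  have [g _ Lg] := injF_bij lin_quartic_inj.
  have mm : (m + m = (m + m - 2).+2)%N by lia.
  have [|y] := @frob_comb_neq0 F S (m + m - 2) erefl erefl.
    by rewrite cardF -expnM ltn_exp2l //; lia.
  by rewrite -mm -(Lg y) comb_L0 eqxx.
have := Sh_Sl_tau_idem F2 C_fixed D_fixed D_neq0.
by rewrite expr2 => idem; apply: (mulfI tau_neq0); rewrite mulr1.
Qed.

Lemma lin_quartic_inv t :
  t ^+ (2 ^ m) = t -> frob_comb (fun j => S (m + j)%N) m (L t) = t.
Proof.
move=> t_fixed.
have Lt_fixed : L t ^+ (2 ^ m) = L t by rewrite -lin_quartic_frob // t_fixed.
have [S2m Sl2m] := Sh_Sl_double F2 C_fixed D_fixed D_neq0.
rewrite Sh_Sl_tau mul1r in S2m Sl2m.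
have := expr_pow2_quartic C D F2 m t; rewrite t_fixed => rem_m.
have := expr_pow2_quartic C D F2 (m + m) t.
rewrite expnD exprM !t_fixed frob_combD // frob_comb_fixed //; last exact: Sh_fixed.
rewrite S2m Sl2m => rem_mm.
have : t = t + frob_comb (fun j => S (m + j)%N) m (L t) + t.
  by rewrite [X in X + _ + _]rem_m {1}rem_mm; ring.
by rewrite addrAC addrr_pchar2 // add0r => <-.
Qed.

Lemma inv_coef i : (i < m)%N ->
  (D ^+ (2 ^ i) * S (m - 1 - i) ^+ (2 ^ i.+1) + D ^ (1 - (2 ^ i)%:Z) * S i.+1)
    * D^-1 ^+ (2 ^ i) = S (m + (m - i.+1)) ^+ (2 ^ i.+1).
Proof.
move=> lt_im; have -> : (m - 1 - i = m - i.+1)%N by lia.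
set n := (m - i.+1)%N; have n_i : (n + i.+1 = m)%N by rewrite /n; lia.
have [Sn_i Sln_i] := Sh_Sl_addn C D F2 n i.+1.
have [Sn1_i _] := Sh_Sl_addn C D F2 n.+1 i.+1.
have [Sm_n _] := Sh_Sl_addn C D F2 m n.
rewrite n_i in Sn_i Sln_i; rewrite addSn n_i in Sn1_i.
set u := S n ^+ (2 ^ i.+1) in Sn_i Sln_i *.
set v := Sl C D n ^+ (2 ^ i.+1) in Sn_i Sln_i.
set w := S n.+1 ^+ (2 ^ i.+1) in Sn1_i.
set z := Sl C D n.+1 ^+ (2 ^ i.+1) in Sn1_i.
have det_i : w * v + z * u = D / D ^+ (2 ^ i.+1).
  have := congr1 (fun x => x ^+ (2 ^ i.+1)) (Sh_Sl_det C D F2 n).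
  rewrite /= -exprM -expnD n_i D_fixed exprMn exprD_pow2 //.
  rewrite [(S n.+1 * _) ^+ _]exprMn [(Sl C D n.+1 * _) ^+ _]exprMn -/u -/v -/w -/z => det.
  by apply: (mulIf (expf_neq0 (2 ^ i.+1) D_neq0)); rewrite det divfK // expf_neq0.
have Smn : S (m + n) ^+ (2 ^ i.+1) = S m * w + Sl C D m * u.
  rewrite Sm_n exprD_pow2 // !exprMn -!exprM -!expnD n_i.
  by rewrite Sh_fixed // Sl_fixed.
have Dpow : D ^ (1 - (2 ^ i)%:Z) * D^-1 ^+ (2 ^ i) = D / D ^+ (2 ^ i.+1).
  by rewrite expfzDr // expr1z -exprnN exprVn -mulrA -invfM -exprD addnn -mul2n -expnS.
have Dpow1 : D ^+ (2 ^ i) * D^-1 ^+ (2 ^ i) = 1 by rewrite -exprMn divff // expr1n.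
rewrite Smn mulrDl mulrAC Dpow1 mul1r [_ * S i.+1 * _]mulrAC Dpow -det_i.
rewrite Sn_i Sln_i -{1}[u]mulr1 -Sh_Sl_tau Sn1_i Sln_i.
by apply: (eq_char2 F2 (e := u * z * S i.+1)); ring.
Qed.

Lemma lin_quartic_invE t : t ^+ (2 ^ m) = t ->
  \sum_(i < m) (D ^+ (2 ^ i) * S (m - 1 - i) ^+ (2 ^ i.+1) + D ^ (1 - (2 ^ i)%:Z) * S i.+1)
    * (D^-1 * L t) ^+ (2 ^ i) = t.
Proof.
move=> t_fixed; rewrite -[RHS](lin_quartic_inv t_fixed) frob_combE //.
by apply: eq_bigr => i _; rewrite exprMn mulrA inv_coef.
Qed.

End FiniteField.

Section Permutation.
Variables (F : finFieldType) (m : nat) (b delta : F).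
Hypotheses (m_gt0 : (0 < m)%N) (cardF : #|F| = ((2 ^ m) ^ 2)%N).
Hypotheses (b_fixed : b ^+ (2 ^ m) = b) (b_neq0 : b != 0) (delta_nfixed : delta ^+ (2 ^ m) != delta).
Local Notation q := (2 ^ m)%N.
Local Notation T := (Tr q delta).
Local Notation A := (b * T).
Local Notation B := (b * delta ^+ (2 * q + 2) * T).
Local Notation C := (T ^+ 2).
Local Notation D := (A^-1).
Local Notation L := (lin_quartic C D).
Local Notation P x := (b * (x ^+ q + x + delta) ^+ (2 * q + 3) + x).
Local Notation Pinv y := (y + b * (delta + \sum_(i < m)
  (D ^+ (2 ^ i) * Sh C D (m - 1 - i) ^+ (2 ^ i.+1) + D ^ (1 - (2 ^ i)%:Z) * Sh C D i.+1)
    * (y ^+ q + y + B) ^+ (2 ^ i)) ^+ (2 * q + 3)).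

Let F2 : 2%N \in [pchar F] := card_pchar2 cardF.
Let expr_frobK : forall x : F, x ^+ q ^+ q = x := expr_pow2_card cardF.

Lemma Tr_fixed (y : F) : Tr q y ^+ q = Tr q y.
Proof. by rewrite exprD_pow2 // expr_frobK addrC. Qed.

Let T_neq0 : T != 0.
Proof. by apply: contra delta_nfixed => T0; rewrite -subr_eq0 oppr_pchar2 // addrC. Qed.

Let D_neq0 : D != 0.
Proof. by rewrite invr_eq0 mulf_neq0. Qed.

Lemma Tr_pow2q3 (s : F) : s ^+ q = s ->
  Tr q (b * (s + delta) ^+ (2 * q + 3)) = A * L s + s + B.
Proof.
move=> s_fixed; rewrite /Tr /lin_quartic.
have exp2q3 (y : F) : y ^+ (2 * q + 3) = y ^+ q ^+ 2 * y ^+ 3 by rewrite exprD exprM exprAC.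
have exp2q2 (y : F) : y ^+ (2 * q + 2) = y ^+ q ^+ 2 * y ^+ 2 by rewrite exprD exprM exprAC.
rewrite !exp2q3 exp2q2 exprMn b_fixed exprMn [(_ ^+ 2) ^+ q]exprAC [(_ ^+ 3) ^+ q]exprAC.
rewrite expr_frobK exprD_pow2 // s_fixed mulrDr [A * (D * s)]mulrA divff ?mulf_neq0 //.
set t := delta ^+ q; rewrite mul1r /Tr -/t.
apply: (eq_char2 F2 (e := b * (s * (s ^+ 2 + s * (delta + t) + delta * t) ^+ 2
  + (delta + t) * (s ^+ 3 * (delta + t) + s ^+ 2 * (delta * t) + s * (delta + t) * (delta * t)))
  - s)).
ring.
Qed.

Lemma P_trace x : P x ^+ q + P x + B = A * L (x ^+ q + x).
Proof.
have t_fixed : (x ^+ q + x) ^+ q = x ^+ q + x by rewrite exprD_pow2 // expr_frobK addrC.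
have := Tr_pow2q3 t_fixed; set y := b * _ ^+ _ => tr.
apply: (eq_char2 F2 (e := x ^+ q + x + B)); rewrite exprD_pow2 //.
by transitivity (Tr q y + x ^+ q + x + B); [rewrite /Tr; ring | rewrite tr; ring].
Qed.

Lemma lin_quartic_fixed_eq0 : bijective (fun x => P x) ->
  forall t, t ^+ q = t -> L t = 0 -> t = 0.
Proof.
move=> P_bij t t_fixed Lt0.
(* [yt + y0] is a preimage of [t] under [x |-> x ^+ q + x] with the same
   image under [P] as [0]. *)
have zero_fixed : (0 : F) ^+ q = 0 by rewrite expr0n expn_eq0.
have := Tr_pow2q3 zero_fixed; rewrite /lin_quartic !expr0n /= !mulr0 !addr0 !add0r.
have := Tr_pow2q3 t_fixed; rewrite Lt0 mulr0 add0r.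
set yt := b * (t + delta) ^+ _; set y0 := b * delta ^+ (2 * q + 3) => tr_t tr_0.
have tr_x : (yt + y0) ^+ q + (yt + y0) = t.
  rewrite exprD_pow2 //; apply: (eq_char2 F2 (e := B)).
  by transitivity (Tr q yt + Tr q y0); [rewrite /Tr; ring | rewrite tr_t tr_0; ring].
have P_x0 : P (yt + y0) = P 0.
  rewrite tr_x addrA addrr_pchar2 // add0r expr0n expn_eq0 /= !add0r.
  by rewrite addr0.
by rewrite -tr_x (bij_inj P_bij P_x0) expr0n expn_eq0 addr0.
Qed.

Lemma P_invK : bijective (fun x => P x) -> cancel (fun x => P x) (fun y => Pinv y).
Proof.
move=> P_bij x; set t := x ^+ q + x.
have t_fixed : t ^+ q = t by rewrite exprD_pow2 // expr_frobK addrC.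
have C_fixed : C ^+ q = C by rewrite fixed_pow2X ?Tr_fixed.
have D_fixed : D ^+ q = D by rewrite exprVn fixed_pow2M ?Tr_fixed.
have := lin_quartic_invE m_gt0 cardF C_fixed D_fixed D_neq0 (lin_quartic_fixed_eq0 P_bij) t_fixed.
rewrite invrK -P_trace => ->.
by rewrite [delta + t]addrC addrAC addrr_pchar2 // add0r.
Qed.

End Permutation.

Theorem theorem3p12 (F : finFieldType) (m : nat) (b delta : F) :
  (0 < m)%N ->
  #|F| = ((2 ^ m) ^ 2)%N ->
  b ^+ (2 ^ m) = b -> b != 0 ->
  delta ^+ (2 ^ m) != delta ->
  let q := (2 ^ m)%N in
  let A := b * Tr q delta in
  let B := b * delta ^+ (2 * q + 2) * Tr q delta in
  let C := Tr q delta ^+ 2 in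
  let D := A^-1 in
  let P := fun x : F => b * (x ^+ q + x + delta) ^+ (2 * q + 3) + x in
  let Pinv := fun x : F =>
    x + b * (delta + \sum_(i < m)
       (D ^+ (2 ^ i) * Sh C D (m - 1 - i) ^+ (2 ^ i.+1)
          + D ^ (1 - (2 ^ i)%:Z) * Sh C D i.+1)
       * (x ^+ q + x + B) ^+ (2 ^ i)) ^+ (2 * q + 3) in
  bijective P ->
  forall c : F, P (Pinv c) = c /\ Pinv (P c) = c.
Proof.
move=> m_gt0 cardF b_fixed b_neq0 delta_nfixed q A B C D P Pinv P_bij c.
have PK : cancel P Pinv := P_invK m_gt0 cardF b_fixed b_neq0 delta_nfixed P_bij.
by split; [apply: (bij_can_sym P_bij Pinv).2 | apply: PK].
Qed.
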